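(* Let $G$ be a group with a non-elementary action by isometries on a geodesic $\delta$-hyperbolic space $X$, and let $o\in X$ be a base point. For any $0<\epsilon<1$ there exists $C$ such that for any $D$ there is a finite set $S\subseteq G$ of loxodromic elements which is $(\epsilon,C,D)$-Schottky and moreover: (1) the sets $V_C(s^+)$ for distinct $s\in S$ are pairwise disjoint; (2) $so\in V_{C+\delta}(s^+)$ for each $s\in S$.
   Context: Gromov product $(x,y)_z=\frac12(d(x,z)+d(y,z)-d(x,y))$, extended to a boundary point $\xi\in\partial X$ in the standard way via sequences converging to $\xi$. An element $g$ is loxodromic if $\lim_n d(g^no,o)/n>0$; then $g^+\in\partial X$ denotes its attracting fixed point, and $V_C(g^+)=\{x\in X:(x,g^+)_o\ge C\}$. The action is non-elementary if $G$ contains two loxodromic elements with disjoint fixed sets in $\partial X$. A finite set $S$ is $(\epsilon,C,D)$-Schottky if for all $x,y\in X$, $\#\{s\in S:(x,sy)_o\le C\}\ge(1-\epsilon)\#S$ and $\#\{s\in S:(x,s^{-1}y)_o\le C\}\ge(1-\epsilon)\#S$, and $d(o,so)\ge D$ for all $s\in S$. *)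

From Stdlib Require Import Reals List.
From Coquelicot Require Import Coquelicot.
Import ListNotations.
Open Scope R_scope.

Section Defs.
Context {X G : Type}.

Definition is_metric (d : X -> X -> R) : Prop :=
  (forall x y, 0 <= d x y) /\ (forall x y, d x y = 0 <-> x = y) /\
  (forall x y, d x y = d y x) /\ (forall x y z, d x z <= d x y + d y z).

Definition geodesic (d : X -> X -> R) : Prop :=
  forall x y, exists gam : R -> X, gam 0 = x /\ gam (d x y) = y /\
    forall s t, 0 <= s <= d x y -> 0 <= t <= d x y ->
      d (gam s) (gam t) = Rabs (s - t).

Definition gprod (d : X -> X -> R) (x y z : X) : R :=
  (d x z + d y z - d x y) / 2.

Definition hyperbolic (d : X -> X -> R) (delta : R) : Prop :=
  0 <= delta /\
  forall x y z w, Rmin (gprod d x y w) (gprod d y z w) - delta <= gprod d x z w.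

Definition conv_inf (d : X -> X -> R) (o : X) (u : nat -> X) : Prop :=
  forall M, exists N, forall n m, (N <= n)%nat -> (N <= m)%nat ->
    M <= gprod d (u n) (u m) o.

Definition seq_equiv (d : X -> X -> R) (o : X) (u v : nat -> X) : Prop :=
  forall M, exists N, forall n m, (N <= n)%nat -> (N <= m)%nat ->
    M <= gprod d (u n) (v m) o.

(* A boundary point is an equivalence class of sequences converging to
   infinity, represented as a predicate on sequences. *)
Definition bd_class (d : X -> X -> R) (o : X) (u : nat -> X) : (nat -> X) -> Prop :=
  fun v => conv_inf d o v /\ seq_equiv d o u v.

Definition is_bd_point (d : X -> X -> R) (o : X) (xi : (nat -> X) -> Prop) : Prop :=
  exists u, conv_inf d o u /\ forall v, xi v <-> bd_class d o u v.

Definition gprod_bd (d : X -> X -> R) (o x : X) (xi : (nat -> X) -> Prop) : Rbar :=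
  Lub_Rbar (fun r => exists u, xi u /\
                     LimInf_seq (fun n => gprod d x (u n) o) = Finite r).

Definition is_group (mul : G -> G -> G) (one : G) (inv : G -> G) : Prop :=
  (forall a b c, mul a (mul b c) = mul (mul a b) c) /\
  (forall a, mul one a = a) /\ (forall a, mul a one = a) /\
  (forall a, mul (inv a) a = one) /\ (forall a, mul a (inv a) = one).

Definition isometric_action (d : X -> X -> R) (mul : G -> G -> G) (one : G)
  (act : G -> X -> X) : Prop :=
  (forall x, act one x = x) /\
  (forall g h x, act (mul g h) x = act g (act h x)) /\
  (forall g x y, d (act g x) (act g y) = d x y).

Definition gpow (mul : G -> G -> G) (one : G) (g : G) (n : nat) : G :=
  Nat.iter n (mul g) one.

Definition loxodromic (d : X -> X -> R) (mul : G -> G -> G) (one : G)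
  (act : G -> X -> X) (o : X) (g : G) : Prop :=
  exists l, 0 < l /\
    is_lim_seq (fun n => d (act (gpow mul one g n) o) o / INR n) (Finite l).

Definition gplus (d : X -> X -> R) (mul : G -> G -> G) (one : G)
  (act : G -> X -> X) (o : X) (g : G) : (nat -> X) -> Prop :=
  bd_class d o (fun n => act (gpow mul one g n) o).

Definition act_bd (inv : G -> G) (act : G -> X -> X) (g : G)
  (xi : (nat -> X) -> Prop) : (nat -> X) -> Prop :=
  fun v => xi (fun n => act (inv g) (v n)).

Definition fixes_bd (inv : G -> G) (act : G -> X -> X) (g : G)
  (xi : (nat -> X) -> Prop) : Prop :=
  forall v, act_bd inv act g xi v <-> xi v.

Definition non_elementary (d : X -> X -> R) (mul : G -> G -> G) (one : G)
  (inv : G -> G) (act : G -> X -> X) (o : X) : Prop :=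
  exists g h, loxodromic d mul one act o g /\ loxodromic d mul one act o h /\
    ~ (exists xi, is_bd_point d o xi /\ fixes_bd inv act g xi /\
                  fixes_bd inv act h xi).

Definition VC (d : X -> X -> R) (o : X) (C : R) (xi : (nat -> X) -> Prop) (x : X) : Prop :=
  Rbar_le (Finite C) (gprod_bd d o x xi).

Definition count_le (d : X -> X -> R) (o : X) (C : R) (x : X)
  (f : G -> X) (S : list G) : nat :=
  length (filter (fun s => if Rle_dec (gprod d x (f s) o) C then true else false) S).

Definition schottky (d : X -> X -> R) (inv : G -> G) (act : G -> X -> X) (o : X)
  (eps C D : R) (S : list G) : Prop :=
  (forall x y,
     (1 - eps) * INR (length S) <= INR (count_le d o C x (fun s => act s y) S) /\
     (1 - eps) * INR (length S) <= INR (count_le d o C x (fun s => act (inv s) y) S)) /\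
  (forall s, In s S -> D <= d o (act s o)).

End Defs.

(* Take loxodromics g, h without common fixed point at infinity. Their orbits then have
   bounded mutual Gromov products at o, so for m large the letters a^{+-1}, b^{+-1}, with
   a = g^m and b = h^m, play ping-pong: each moves o by at least L, and two distinct
   letters have Gromov product at most c, where 2c + 3 delta < L. The orbit points read
   along a reduced word then form a chain with long steps and small turns, so their
   distance to the start grows linearly and every intermediate point x_k satisfies
   (x_0, x_end)_{x_k} <= c + 2 delta.
   The Schottky set consists of the conjugates s_i = b^i a^n b^-i, 1 <= i <= N, with
   N > 2/eps. The points s_i^{+-1} o are at distance >= n (L - 2c - 2 delta) from o but
   have pairwise Gromov products at most a constant K independent of n. So, given x and
   y, at most one index has (y, s_i^-1 o)_o large and at most one has (x, s_i o)_o large,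
   and every other index satisfies (x, s_i y)_o <= C := K + 2 delta + 1. The same bound
   K separates the shadows V_C(s_i^+), and n is finally taken large with respect to D. *)

From Stdlib Require Import Reals List Lra Lia Classical FunctionalExtensionality.
From Coquelicot Require Import Coquelicot.
Import ListNotations.
Open Scope R_scope.

Lemma exists_nat_mul_gt (r e : R) : 0 < e -> exists N : nat, (1 <= N)%nat /\ r < e * INR N.
Proof.
  intros He. destruct (INR_unbounded (r / e)) as [N HN]. exists (S N). split; [lia|].
  rewrite S_INR. apply (Rmult_lt_compat_l e) in HN; [|lra].
  replace (e * (r / e)) with r in HN by (field; lra). lra.
Qed.

Lemma INR_lt_mul_div_succ n p : (1 <= p)%nat -> INR n < INR p * (INR (n / p) + 1).
Proof.
  intros Hp. pose proof (Nat.div_mod_eq n p). pose proof (Nat.mod_upper_bound n p ltac:(lia)).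
  assert (INR (n mod p) < INR p) by (apply lt_INR; lia).
  replace (INR n) with (INR p * INR (n / p) + INR (n mod p))
    by (rewrite <- mult_INR, <- plus_INR; f_equal; lia). lra.
Qed.

Lemma length_filter_ge_excl (f : nat -> bool) (N i1 i2 : nat) :
  (forall i, (1 <= i <= N)%nat -> f i = false -> i = i1 \/ i = i2) ->
  INR N - 2 <= INR (length (filter f (seq 1 N))).
Proof.
  intros Hbad.
  assert (Hsplit : forall l : list nat,
     length l = (length (filter f l) + length (filter (fun i => negb (f i)) l))%nat).
  { induction l as [|i l IH]; simpl; auto. rewrite IH. destruct (f i); simpl; lia. }
  assert (Hneg : (length (filter (fun i => negb (f i)) (seq 1 N)) <= length [i1; i2])%nat).
  { apply NoDup_incl_length; [apply NoDup_filter, seq_NoDup|].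
    intros i Hi. apply filter_In in Hi as [Hi Hfi]. apply in_seq in Hi.
    destruct (f i) eqn:Ef; try discriminate.
    destruct (Hbad i ltac:(lia) Ef) as [-> | ->]; simpl; auto. }
  pose proof (Hsplit (seq 1 N)) as HN. rewrite length_seq in HN. simpl in Hneg.
  assert (Hle : (N <= length (filter f (seq 1 N)) + 2)%nat) by lia.
  apply le_INR in Hle. rewrite plus_INR in Hle. simpl in Hle. lra.
Qed.

Lemma filterlim_mul_const k : (1 <= k)%nat ->
  filterlim (fun m => (m * k)%nat) eventually eventually.
Proof. intros Hk P [N HN]. exists N. intros m Hm. apply HN. nia. Qed.

Inductive letter := La | LA | Lb | LB.

Definition linv (l : letter) : letter :=
  match l with La => LA | LA => La | Lb => LB | LB => Lb end.

Fixpoint reduced (w : list letter) : Prop :=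
  match w with
  | [] => True
  | l :: w' => match w' with [] => True | l' :: _ => l' <> linv l end /\ reduced w'
  end.

Lemma reduced_nth w : reduced w ->
  forall k, (S k < length w)%nat -> nth (S k) w La <> linv (nth k w La).
Proof.
  induction w as [|l w IH]; intros Hw k Hk; simpl in *; [lia|].
  destruct w as [|l' w']; simpl in Hk; [lia|]. destruct Hw as [Hl Hw].
  destruct k; simpl; auto. apply (IH Hw k). simpl in *. lia.
Qed.

Lemma reduced_repeat_app l l' m m' w : reduced (repeat l' (S m') ++ w) -> l' <> linv l ->
  reduced (repeat l (S m) ++ repeat l' (S m') ++ w).
Proof.
  intros Hw Hl'. induction m as [|m IH]; simpl in *; split; auto.
  destruct l; discriminate.
Qed.

Lemma reduced_repeat l m : reduced (repeat l m).
Proof.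
  induction m as [|[|m] IH]; simpl in *; auto. split; auto. destruct l; discriminate.
Qed.

Lemma firstn_S_nth {A : Type} (w : list A) k a : (k < length w)%nat ->
  firstn (S k) w = firstn k w ++ [nth k w a].
Proof.
  revert k. induction w as [|x w IH]; intros k Hk; simpl in *; [lia|].
  destruct k; auto. simpl. f_equal. apply IH. lia.
Qed.

Lemma firstn_repeat_app {A : Type} (x : A) t M r : (t <= M)%nat ->
  firstn t (repeat x M ++ r) = repeat x t.
Proof.
  revert M. induction t as [|t IH]; intros M Ht; auto.
  destruct M; [lia|]. simpl. f_equal. apply IH. lia.
Qed.

Section Hyperbolic.
Context {X : Type} (d : X -> X -> R) (delta : R) (o : X).
Hypothesis d_metric : is_metric d.
Hypothesis d_hyp : hyperbolic d delta.

Local Notation gp := (gprod d).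

Lemma dist_ge0 x y : 0 <= d x y. Proof. apply d_metric. Qed.
Lemma dist_sym x y : d x y = d y x. Proof. apply d_metric. Qed.
Lemma dist_triangle x y z : d x z <= d x y + d y z. Proof. apply d_metric. Qed.
Lemma dist_self x : d x x = 0. Proof. apply d_metric; reflexivity. Qed.
Lemma delta_ge0 : 0 <= delta. Proof. apply d_hyp. Qed.

Lemma gprod_sym x y z : gp x y z = gp y x z.
Proof. unfold gprod. rewrite (dist_sym x y). lra. Qed.

Lemma gprod_ge0 x y z : 0 <= gp x y z.
Proof. unfold gprod. pose proof (dist_triangle x z y). rewrite (dist_sym z y) in *. lra. Qed.

Lemma gprod_le_dist_l x y z : gp x y z <= d x z.
Proof. unfold gprod. pose proof (dist_triangle y x z). rewrite (dist_sym y x) in *. lra. Qed.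

Lemma gprod_le_dist_r x y z : gp x y z <= d y z.
Proof. rewrite gprod_sym. apply gprod_le_dist_l. Qed.

Lemma gprod_diag x w : gp x x w = d x w.
Proof. unfold gprod. rewrite dist_self. lra. Qed.

Lemma gprod_add_swap x y w : gp x y w + gp x w y = d y w.
Proof. unfold gprod. rewrite (dist_sym w y). lra. Qed.

Lemma dist_gprod x y w : d x y = d x w + d y w - 2 * gp x y w.
Proof. unfold gprod. lra. Qed.

Lemma gprod_basepoint_le x y w z : gp x y w <= gp x y z + d w z.
Proof.
  unfold gprod. pose proof (dist_triangle x z w). pose proof (dist_triangle y z w).
  rewrite (dist_sym z w) in *. lra.
Qed.

Lemma gprod_lipschitz_l x x' y w : gp x y w <= gp x' y w + d x x'.
Proof.
  unfold gprod. pose proof (dist_triangle x x' w). pose proof (dist_triangle x' x y).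
  rewrite (dist_sym x' x) in *. lra.
Qed.

Lemma gprod_four_point x y z w M :
  M <= gp x y w -> M <= gp y z w -> M - delta <= gp x z w.
Proof.
  intros Hxy Hyz. destruct d_hyp as [_ H4]. specialize (H4 x y z w).
  unfold Rmin in H4. destruct (Rle_dec _ _); lra.
Qed.

Lemma gprod_four_point_lt x y z w M :
  M < gp x y w -> M < gp y z w -> M - delta < gp x z w.
Proof.
  intros Hxy Hyz.
  pose proof (gprod_four_point x y z w _ (Rmin_l (gp x y w) (gp y z w)) (Rmin_r _ _)).
  unfold Rmin in *. destruct (Rle_dec _ _); lra.
Qed.

Lemma gprod_isometry (F : X -> X) : (forall x y, d (F x) (F y) = d x y) ->
  forall x y z, gp (F x) (F y) (F z) = gp x y z.
Proof. intros HF x y z. unfold gprod. rewrite !HF. reflexivity. Qed.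

(* The Gromov product (x_{k-1}, x_{k+1})_{x_k} measures how sharply the chain turns at x_k. *)
Definition chain (x : nat -> X) (n : nat) (L c : R) : Prop :=
  (forall k, (k < n)%nat -> L <= d (x k) (x (S k))) /\
  (forall k, (1 <= k)%nat -> (k < n)%nat -> gp (x (k - 1)%nat) (x (S k)) (x k) <= c).

Lemma chain_rev x n L c : chain x n L c -> chain (fun j => x (n - j)%nat) n L c.
Proof.
  intros [Hstep Hturn]. split.
  - intros j Hj. replace (n - j)%nat with (S (n - S j)) by lia.
    rewrite dist_sym. apply Hstep. lia.
  - intros j H1 H2. rewrite gprod_sym.
    replace (n - (j - 1))%nat with (S (n - j)) by lia.
    replace (n - S j)%nat with (n - j - 1)%nat by lia. apply Hturn; lia.
Qed.

Section Chain.
Variables (x : nat -> X) (n : nat) (L c : R).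
Hypothesis c_ge0 : 0 <= c.
Hypothesis x_chain : chain x n L c.

Lemma chain_gprod_last : 2 * c + 2 * delta < L ->
  forall m, (1 <= m <= n)%nat -> gp (x 0%nat) (x m) (x (m - 1)%nat) <= c + delta.
Proof.
  intros HL. destruct x_chain as [Hstep Hturn]. pose proof delta_ge0.
  induction m as [|m IH]; intros Hm; [lia|].
  destruct m as [|m].
  - simpl. unfold gprod. rewrite dist_self, (dist_sym (x 1%nat)). lra.
  - replace (S (S m) - 1)%nat with (S m) by lia.
    assert (Hprev : gp (x (S m)) (x 0%nat) (x m) <= c + delta).
    { rewrite gprod_sym. replace m with (S m - 1)%nat at 2 by lia. apply IH. lia. }
    assert (Hlong : L <= d (x (S m)) (x m)) by (rewrite dist_sym; apply Hstep; lia).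
    pose proof (gprod_add_swap (x 0%nat) (x m) (x (S m))) as Hswap.
    destruct (Rle_dec (gp (x 0%nat) (x (S (S m))) (x (S m))) (c + delta)) as [|Hbig]; auto.
    (* the turn at x_{S m} would be large *)
    assert (Hback : c + delta < gp (x m) (x 0%nat) (x (S m))).
    { pose proof (dist_sym (x m) (x (S m))). pose proof (dist_sym (x m) (x 0%nat)).
      pose proof (dist_sym (x (S m)) (x 0%nat)). unfold gprod in *. lra. }
    pose proof (gprod_four_point_lt _ _ (x (S (S m))) _ _ Hback ltac:(lra)).
    pose proof (Hturn (S m) ltac:(lia) ltac:(lia)) as Hturn'.
    replace (S m - 1)%nat with m in Hturn' by lia. lra.
Qed.

Lemma chain_dist_ge : 2 * c + 2 * delta < L ->
  forall m, (m <= n)%nat -> INR m * (L - 2 * c - 2 * delta) <= d (x 0%nat) (x m).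
Proof.
  intros HL m. destruct x_chain as [Hstep _]. induction m as [|m IH]; intros Hm.
  - simpl. rewrite dist_self. lra.
  - pose proof (chain_gprod_last HL (S m) ltac:(lia)) as Hlast.
    replace (S m - 1)%nat with m in Hlast by lia.
    rewrite (dist_gprod (x 0%nat) (x (S m)) (x m)), S_INR.
    assert (L <= d (x (S m)) (x m)) by (rewrite dist_sym; apply Hstep; lia).
    specialize (IH ltac:(lia)). lra.
Qed.

End Chain.

Lemma chain_gprod_interior x n L c : 0 <= c -> 2 * c + 3 * delta < L -> chain x n L c ->
  forall k, (0 < k < n)%nat -> gp (x 0%nat) (x n) (x k) <= c + 2 * delta.
Proof.
  intros Hc HL Hx k Hk. pose proof delta_ge0. pose proof Hx as [Hstep _].
  pose proof (chain_gprod_last x n L c Hc Hx ltac:(lra) (S k) ltac:(lia)) as Hfwd.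
  pose proof (chain_gprod_last _ n L c Hc (chain_rev x n L c Hx) ltac:(lra) (n - k)
    ltac:(lia)) as Hbwd.
  cbv beta in Hbwd. replace (n - 0)%nat with n in Hbwd by lia.
  replace (n - (n - k))%nat with k in Hbwd by lia.
  replace (n - (n - k - 1))%nat with (S k) in Hbwd by lia.
  replace (S k - 1)%nat with k in Hfwd by lia.
  pose proof (gprod_add_swap (x n) (x (S k)) (x k)).
  assert (L <= d (x (S k)) (x k)) by (rewrite dist_sym; apply Hstep; lia).
  destruct (Rle_dec (gp (x 0%nat) (x n) (x k)) (c + 2 * delta)) as [|Hbig]; auto.
  pose proof (gprod_four_point_lt (x 0%nat) (x n) (x (S k)) (x k) (c + 2 * delta)
    ltac:(lra) ltac:(lra)). lra.
Qed.

Lemma chain_gprod_ge x n L c : 0 <= c -> 2 * c + 3 * delta < L -> chain x n L c ->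
  forall q, (q <= n)%nat ->
    INR q * (L - 2 * c - 2 * delta) - c - 2 * delta <= gp (x q) (x n) (x 0%nat).
Proof.
  intros Hc HL Hx q Hq. pose proof delta_ge0.
  pose proof (chain_dist_ge x n L c Hc Hx ltac:(lra) q Hq) as Hdist.
  destruct (Nat.eq_dec q 0) as [->|Hq0].
  { pose proof (gprod_ge0 (x 0%nat) (x n) (x 0%nat)). simpl. lra. }
  destruct (Nat.eq_dec q n) as [->|Hqn].
  { rewrite gprod_diag, dist_sym. lra. }
  pose proof (chain_gprod_interior x n L c Hc HL Hx q ltac:(lia)).
  pose proof (gprod_add_swap (x n) (x q) (x 0%nat)).
  rewrite (gprod_sym (x n) (x 0%nat)), (gprod_sym (x n) (x q)), (dist_sym (x q)) in *. lra.
Qed.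

Lemma gprod_translate_split (T T' : X -> X) x y C A :
  (forall z w, d (T z) (T w) = d z w) -> (forall z, T (T' z) = z) ->
  C + A <= d (T o) o -> C < gp x (T y) o -> A <= gp y (T' o) o \/ C - delta < gp x (T o) o.
Proof.
  intros HT HTT' Hfar Hxy.
  assert (Hsum : gp (T y) (T o) o + gp y (T' o) o = d (T o) o).
  { assert (E1 : d (T y) o = d y (T' o)) by (rewrite <- (HT y (T' o)), HTT'; reflexivity).
    assert (E2 : d (T' o) o = d o (T o)) by (rewrite <- (HT (T' o) o), HTT'; reflexivity).
    unfold gprod. rewrite E1, E2, HT, (dist_sym o (T o)). lra. }
  destruct (Rle_dec A (gp y (T' o) o)) as [|Hsmall]; [left; auto|right].
  apply (gprod_four_point_lt x (T y) (T o) o C Hxy). lra.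
Qed.

Definition gprod_separated (P : nat -> X) (N : nat) (K : R) : Prop :=
  forall i j, (1 <= i <= N)%nat -> (1 <= j <= N)%nat -> i <> j -> gp (P i) (P j) o <= K.

Lemma gprod_ge_at_most_one (P : nat -> X) (N : nat) y K M : K + delta < M ->
  gprod_separated P N K -> exists i0, forall i, (1 <= i <= N)%nat -> M <= gp y (P i) o -> i = i0.
Proof.
  intros HKM Hsep.
  destruct (classic (exists i0, (1 <= i0 <= N)%nat /\ M <= gp y (P i0) o))
    as [[i0 [Hi0 Hy0]]|Hnone].
  - exists i0. intros i Hi Hy. destruct (Nat.eq_dec i i0) as [|Hne]; auto.
    rewrite gprod_sym in Hy.
    pose proof (gprod_four_point _ _ _ _ _ Hy Hy0). specialize (Hsep i i0 Hi Hi0 Hne). lra.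
  - exists 0%nat. intros i Hi Hy. exfalso. apply Hnone. eauto.
Qed.

(* A point y sees at most one of the T' i o, and x at most one of the T i o, under a
   large Gromov product; any other index i has (x, T i y)_o small. *)
Lemma gprod_translates_few_large (T T' : nat -> X -> X) (N : nat) (K : R) x y :
  (forall i z w, d (T i z) (T i w) = d z w) -> (forall i z, T i (T' i z) = z) ->
  (forall i, (1 <= i <= N)%nat -> 2 * K + 3 * delta + 2 <= d (T i o) o) ->
  gprod_separated (fun i => T i o) N K -> gprod_separated (fun i => T' i o) N K ->
  exists i1 i2, forall i, (1 <= i <= N)%nat ->
    K + 2 * delta + 1 < gp x (T i y) o -> i = i1 \/ i = i2.
Proof.
  intros HT HTT' Hfar HsepT HsepT'.
  destruct (gprod_ge_at_most_one _ N y K (K + delta + 1) ltac:(lra) HsepT') as [i1 Hi1].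
  destruct (gprod_ge_at_most_one _ N x K (K + delta + 1) ltac:(lra) HsepT) as [i2 Hi2].
  exists i1, i2. intros i Hi Hlarge.
  destruct (gprod_translate_split (T i) (T' i) x y (K + 2 * delta + 1) (K + delta + 1)
    (HT i) (HTT' i) ltac:(specialize (Hfar i Hi); lra) Hlarge) as [Hy|Hx].
  - left. auto.
  - right. apply Hi2; auto. lra.
Qed.

Lemma VC_gprod_ge_eventually (w : nat -> X) C x : VC d o C (bd_class d o w) x ->
  exists N, forall k, (N <= k)%nat -> C - 1 / 2 - delta <= gp x (w k) o.
Proof.
  unfold VC, gprod_bd.
  set (E := fun r => exists u, bd_class d o w u /\
                               LimInf_seq (fun n => gp x (u n) o) = Finite r).
  intros HC.
  assert (Hr : exists r, E r /\ C - 1 / 4 < r).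
  { apply NNPP. intros Hn. destruct (Lub_Rbar_correct E) as [_ Hlub].
    assert (Hub : is_ub_Rbar E (C - 1 / 4)).
    { intros r Er. simpl. apply Rnot_lt_le. intros Hlt. apply Hn. eauto. }
    pose proof (Rbar_le_trans _ _ _ HC (Hlub _ Hub)). simpl in *. lra. }
  destruct Hr as [r [[v [[_ Hvw] Hli]] Hr]].
  destruct (ex_LimInf_seq (fun n => gp x (v n) o)) as [l Hl].
  rewrite (is_LimInf_seq_unique _ _ Hl) in Hli. subst l.
  destruct (Hl (mkposreal (1 / 4) ltac:(lra))) as [_ [N1 HN1]]. simpl in HN1.
  destruct (Hvw C) as [N2 HN2].
  exists N2. intros k Hk.
  pose proof (HN1 (Nat.max N1 N2) ltac:(lia)) as Hx.
  pose proof (HN2 k (Nat.max N1 N2) Hk ltac:(lia)) as Hwv. rewrite gprod_sym in Hwv.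
  pose proof (gprod_four_point x (v (Nat.max N1 N2)) (w k) o (C - 1 / 2) ltac:(lra) ltac:(lra)).
  lra.
Qed.

Lemma gprod_ge_VC (w : nat -> X) C x : bd_class d o w w ->
  (forall k, (1 <= k)%nat -> C <= gp x (w k) o) -> VC d o C (bd_class d o w) x.
Proof.
  intros Hw Hk. unfold VC, gprod_bd.
  set (f := fun n => gp x (w n) o).
  assert (Hlo : Rbar_le (Finite C) (LimInf_seq f)).
  { rewrite <- (LimInf_seq_const C). apply LimInf_le. exists 1%nat. intros n Hn. apply Hk; auto. }
  assert (Hhi : Rbar_le (LimInf_seq f) (Finite (d x o))).
  { rewrite <- (LimInf_seq_const (d x o)). apply LimInf_le. exists 0%nat. intros n _.
    apply gprod_le_dist_l. }
  destruct (LimInf_seq f) as [r| |] eqn:Ef; simpl in Hlo, Hhi; try contradiction.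
  apply Rbar_le_trans with (Finite r); auto.
  apply Lub_Rbar_correct. exists w. split; auto.
Qed.

Lemma seq_equiv_sym u v : seq_equiv d o u v -> seq_equiv d o v u.
Proof.
  intros H M. destruct (H M) as [N HN]. exists N. intros n m Hn Hm.
  rewrite gprod_sym. auto.
Qed.

Lemma seq_equiv_trans u v w : seq_equiv d o u v -> seq_equiv d o v w -> seq_equiv d o u w.
Proof.
  intros Huv Hvw M. destruct (Huv (M + delta)) as [N1 HN1]. destruct (Hvw (M + delta)) as [N2 HN2].
  set (k := Nat.max N1 N2). exists k. intros n m Hn Hm.
  pose proof (gprod_four_point (u n) (v k) (w m) o (M + delta)
    (HN1 n k ltac:(lia) ltac:(lia)) (HN2 k m ltac:(lia) ltac:(lia))). lra.
Qed.

Lemma bd_class_ext u1 u2 : seq_equiv d o u1 u2 ->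
  forall v, bd_class d o u1 v <-> bd_class d o u2 v.
Proof.
  intros H v. unfold bd_class. split; intros [Hv Huv]; split; auto.
  - exact (seq_equiv_trans _ _ _ (seq_equiv_sym _ _ H) Huv).
  - exact (seq_equiv_trans _ _ _ H Huv).
Qed.

End Hyperbolic.

Section Action.
Context {X G : Type} (d : X -> X -> R) (delta : R) (mul : G -> G -> G) (one : G)
  (inv : G -> G) (act : G -> X -> X) (o : X).
Hypothesis d_metric : is_metric d.
Hypothesis d_hyp : hyperbolic d delta.
Hypothesis G_group : is_group mul one inv.
Hypothesis G_act : isometric_action d mul one act.

Local Notation gp := (gprod d).
Local Notation dist_ge0 := (dist_ge0 d d_metric).
Local Notation dist_sym := (dist_sym d d_metric).
Local Notation dist_triangle := (dist_triangle d d_metric).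
Local Notation dist_self := (dist_self d d_metric).
Local Notation delta_ge0 := (delta_ge0 d delta d_hyp).
Local Notation gprod_sym := (gprod_sym d d_metric).
Local Notation gprod_diag := (gprod_diag d d_metric).
Local Notation gprod_four_point := (gprod_four_point d delta d_hyp).

Lemma act_dist g x y : d (act g x) (act g y) = d x y. Proof. apply G_act. Qed.
Lemma act_mul g h x : act (mul g h) x = act g (act h x). Proof. apply G_act. Qed.
Lemma act_one x : act one x = x. Proof. apply G_act. Qed.

Lemma act_inv_l g x : act (inv g) (act g x) = x.
Proof. rewrite <- act_mul. destruct G_group as (_&_&_&Hinv&_). rewrite Hinv. apply act_one. Qed.

Lemma act_inv_r g x : act g (act (inv g) x) = x.
Proof. rewrite <- act_mul. destruct G_group as (_&_&_&_&Hinv). rewrite Hinv. apply act_one. Qed.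

Lemma act_invK g y : act (inv (inv g)) y = act g y.
Proof. rewrite <- (act_inv_l g y) at 1. apply act_inv_l. Qed.

Lemma gprod_act g x y z : gp (act g x) (act g y) (act g z) = gp x y z.
Proof. apply gprod_isometry. apply act_dist. Qed.

Definition iter_act (g : G) (k : nat) (y : X) : X := Nat.iter k (act g) y.

Lemma iter_act_S g k y : iter_act g (S k) y = act g (iter_act g k y).
Proof. reflexivity. Qed.

Lemma iter_act_Sr g k y : iter_act g (S k) y = iter_act g k (act g y).
Proof. apply Nat.iter_succ_r. Qed.

Lemma iter_act_add g m k y : iter_act g (m + k) y = iter_act g m (iter_act g k y).
Proof. apply Nat.iter_add. Qed.

Lemma iter_act_dist g k x y : d (iter_act g k x) (iter_act g k y) = d x y.
Proof. induction k as [|k IH]; simpl; auto. rewrite act_dist. auto. Qed.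

Lemma iter_act_inv_r g k y : iter_act g k (iter_act (inv g) k y) = y.
Proof.
  induction k as [|k IH]; auto.
  rewrite iter_act_Sr, iter_act_S, act_inv_r. auto.
Qed.

Lemma iter_act_inv_l g k y : iter_act (inv g) k (iter_act g k y) = y.
Proof.
  induction k as [|k IH]; auto.
  rewrite iter_act_Sr, iter_act_S, act_inv_l. auto.
Qed.

Lemma act_gpow g p y : act (gpow mul one g p) y = iter_act g p y.
Proof. induction p as [|p IH]; simpl. apply act_one. rewrite act_mul. f_equal. auto. Qed.

Lemma act_inv_gpow g p y : act (inv (gpow mul one g p)) y = iter_act (inv g) p y.
Proof. rewrite <- (iter_act_inv_r g p y) at 1. rewrite <- act_gpow. apply act_inv_l. Qed.

Lemma iter_act_gpow g p k y : iter_act (gpow mul one g p) k y = iter_act g (k * p) y.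
Proof.
  induction k as [|k IH]; auto.
  rewrite iter_act_S, act_gpow, IH, <- iter_act_add. f_equal.
Qed.

Lemma dist_iter_act_le g k : d (iter_act g k o) o <= INR k * d (act g o) o.
Proof.
  induction k as [|k IH].
  - simpl. rewrite dist_self. lra.
  - rewrite iter_act_Sr, S_INR.
    pose proof (dist_triangle (iter_act g k (act g o)) (iter_act g k o) o).
    rewrite iter_act_dist in *. lra.
Qed.

Lemma dist_iter_act_inv g p : d (iter_act (inv g) p o) o = d (iter_act g p o) o.
Proof. rewrite <- (iter_act_dist g p), iter_act_inv_r. apply dist_sym. Qed.

Lemma dist_iter_act_basepoint g k z :
  Rabs (d (iter_act g k z) z - d (iter_act g k o) o) <= 2 * d z o.
Proof.
  pose proof (dist_triangle (iter_act g k z) (iter_act g k o) z).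
  pose proof (dist_triangle (iter_act g k o) o z).
  pose proof (dist_triangle (iter_act g k o) (iter_act g k z) o).
  pose proof (dist_triangle (iter_act g k z) z o).
  rewrite !iter_act_dist, (dist_sym o z) in *. apply Rabs_le. lra.
Qed.

Definition is_stable_length (g : G) (l : R) : Prop :=
  is_lim_seq (fun n => d (iter_act g n o) o / INR n) l.

Lemma loxodromicP g : loxodromic d mul one act o g <-> exists l, 0 < l /\ is_stable_length g l.
Proof.
  unfold loxodromic, is_stable_length.
  split; intros [l [Hl Hlim]]; exists l; split; auto;
    (eapply is_lim_seq_ext; [|exact Hlim]); intros n; simpl; rewrite act_gpow; reflexivity.
Qed.

Lemma stable_length_le g l : is_stable_length g l ->
  forall k, (1 <= k)%nat -> l * INR k <= d (iter_act g k o) o.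
Proof.
  intros Hlim k Hk.
  pose proof (is_lim_seq_subseq _ _ _ (filterlim_mul_const k Hk) Hlim) as Hs. simpl in Hs.
  assert (Hk0 : 0 < INR k) by (apply lt_0_INR; lia).
  (* subadditivity: d(g^{mk} o, o) <= m d(g^k o, o) *)
  assert (Hle : Rbar_le l (d (iter_act g k o) o / INR k)).
  { apply (is_lim_seq_le_loc _ _ _ _) with (2 := Hs) (3 := is_lim_seq_const _).
    exists 1%nat. intros m Hm. rewrite mult_INR.
    assert (Hm0 : 0 < INR m) by (apply lt_0_INR; lia).
    pose proof (dist_iter_act_le (gpow mul one g k) m) as Hsa.
    rewrite act_gpow, iter_act_gpow in Hsa.
    apply (Rmult_le_reg_l (INR m * INR k)); [nra|].
    field_simplify; [|lra|lra]. lra. }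
  simpl in Hle. apply (Rmult_le_reg_r (/ INR k)); [apply Rinv_0_lt_compat; auto|].
  replace (l * INR k * / INR k) with l by (field; lra). exact Hle.
Qed.

Lemma stable_length_ge_eventually g l : is_stable_length g l ->
  forall eta, 0 < eta -> exists N, forall n, (N <= n)%nat ->
    d (iter_act g n o) o <= (l + eta) * INR n.
Proof.
  intros Hlim eta He. apply is_lim_seq_spec in Hlim.
  destruct (Hlim (mkposreal eta He)) as [N HN].
  exists (S N). intros n Hn. specialize (HN n ltac:(lia)). simpl in HN.
  assert (Hn0 : 0 < INR n) by (apply lt_0_INR; lia).
  apply Rabs_def2 in HN as [HN _].
  apply (Rmult_lt_compat_r (INR n)) in HN; [|lra].
  replace ((d (iter_act g n o) o / INR n - l) * INR n) with (d (iter_act g n o) o - l * INR n)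
    in HN by (field; lra). lra.
Qed.

(* (g^{-p} o, g^p o)_o = d(g^p o, o) - d(g^{2p} o, o) / 2 = o(p) *)
Lemma gprod_inv_orbit_small g l : is_stable_length g l ->
  forall eta, 0 < eta -> exists P, forall p, (P <= p)%nat ->
    gp (iter_act (inv g) p o) (iter_act g p o) o <= eta * INR p.
Proof.
  intros Hlim eta He. destruct (stable_length_ge_eventually g l Hlim eta He) as [N HN].
  exists (S N). intros p Hp. specialize (HN p ltac:(lia)).
  pose proof (stable_length_le g l Hlim (p + p) ltac:(lia)) as H2p.
  unfold gprod. rewrite dist_iter_act_inv.
  assert (E : d (iter_act (inv g) p o) (iter_act g p o) = d (iter_act g (p + p) o) o).
  { rewrite <- (iter_act_dist g p), iter_act_inv_r, <- iter_act_add. apply dist_sym. }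
  rewrite E, plus_INR in *. lra.
Qed.

Lemma loxodromic_inv g : loxodromic d mul one act o g -> loxodromic d mul one act o (inv g).
Proof.
  rewrite !loxodromicP. intros [l [Hl Hlim]]. exists l. split; auto.
  eapply is_lim_seq_ext; [|exact Hlim]. intros n. simpl. rewrite dist_iter_act_inv. reflexivity.
Qed.

Lemma orbit_pow_chain g l : 0 < l -> is_stable_length g l ->
  exists P, forall p, (P <= p)%nat -> (1 <= p)%nat -> forall n,
    chain d (fun k => iter_act (gpow mul one g p) k o) n (l * INR p) (l * INR p / 8).
Proof.
  intros Hl Hlim. destruct (gprod_inv_orbit_small g l Hlim (l / 8) ltac:(lra)) as [P HP].
  exists P. intros p HPp Hp n. set (A := gpow mul one g p). split.
  - intros k _. rewrite iter_act_Sr, iter_act_dist, dist_sym.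
    unfold A. rewrite act_gpow. apply stable_length_le; auto.
  - intros k Hk _. destruct k as [|k]; [lia|]. replace (S k - 1)%nat with k by lia.
    rewrite !(iter_act_Sr A), (gprod_isometry d (iter_act A k) (iter_act_dist A k)).
    rewrite <- (gprod_act (inv A)), !act_inv_l.
    unfold A. rewrite act_inv_gpow, act_gpow. specialize (HP p HPp). lra.
Qed.

Lemma dist_orbit_pow_near g p n : (1 <= p)%nat ->
  d (iter_act g n o) (iter_act (gpow mul one g p) (n / p) o) <= INR p * d (act g o) o.
Proof.
  intros Hp. pose proof (Nat.div_mod_eq n p) as Ediv.
  pose proof (Nat.mod_upper_bound n p ltac:(lia)) as Hmod.
  rewrite iter_act_gpow. replace n with (n / p * p + n mod p)%nat at 1 by lia.
  rewrite iter_act_add, iter_act_dist.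
  pose proof (dist_iter_act_le g (n mod p)). pose proof (dist_ge0 (act g o) o).
  assert (INR (n mod p) <= INR p) by (apply le_INR; lia). nra.
Qed.

Lemma orbit_gprod_linear g : loxodromic d mul one act o g ->
  exists kap K, 0 < kap /\ forall n m, (n <= m)%nat ->
    kap * INR n - K <= gp (iter_act g n o) (iter_act g m o) o.
Proof.
  rewrite loxodromicP. intros [l [Hl Hlim]]. pose proof delta_ge0.
  destruct (orbit_pow_chain g l Hl Hlim) as [P HP].
  destruct (exists_nat_mul_gt (4 * delta) l Hl) as [p0 [Hp0 Hlp0]].
  set (p := Nat.max p0 (Nat.max P 1)).
  assert (Hp : 0 < INR p) by (apply lt_0_INR; lia).
  assert (Hlp : 4 * delta < l * INR p).
  { assert (INR p0 <= INR p) by (apply le_INR; lia). nra. }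
  set (x := fun k => iter_act (gpow mul one g p) k o).
  set (L := l * INR p). set (c := L / 8). set (beta := L - 2 * c - 2 * delta).
  assert (Hbeta : 0 < beta) by (unfold beta, c, L; lra).
  assert (Hx : forall q q', (q <= q')%nat -> INR q * beta - c - 2 * delta <= gp (x q) (x q') o).
  { intros q q' Hq. apply (chain_gprod_ge d delta d_metric d_hyp x q' L c);
      auto; unfold c, L; try lra. apply HP; lia. }
  set (D1 := d (act g o) o).
  exists (beta / INR p), (beta + c + 2 * delta + 2 * (INR p * D1)). split.
  { apply Rdiv_lt_0_compat; auto. }
  intros n m Hnm.
  pose proof (dist_orbit_pow_near g p n ltac:(lia)) as Hn.
  pose proof (dist_orbit_pow_near g p m ltac:(lia)) as Hm.
  pose proof (Hx (n / p)%nat (m / p)%nat (Nat.Div0.div_le_mono n m p Hnm)) as Hq.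
  pose proof (gprod_lipschitz_l d d_metric (x (n / p)%nat) (iter_act g n o) (x (m / p)%nat) o).
  pose proof (gprod_lipschitz_l d d_metric (x (m / p)%nat) (iter_act g m o) (iter_act g n o) o).
  rewrite (gprod_sym (x (m / p)%nat)), (gprod_sym (iter_act g m o)) in *.
  rewrite (dist_sym (x (n / p)%nat)), (dist_sym (x (m / p)%nat)) in *.
  pose proof (INR_lt_mul_div_succ n p ltac:(lia)).
  assert (beta / INR p * INR n <= beta * (INR (n / p) + 1)).
  { apply (Rmult_le_reg_l (INR p)); auto. field_simplify; [|lra]. nra. }
  change (iter_act (gpow mul one g p) (n / p) o) with (x (n / p)%nat) in Hn.
  change (iter_act (gpow mul one g p) (m / p) o) with (x (m / p)%nat) in Hm.
  unfold D1. lra.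
Qed.

Lemma orbit_conv_inf g : loxodromic d mul one act o g ->
  conv_inf d o (fun n => iter_act g n o).
Proof.
  intros Hg M. destruct (orbit_gprod_linear g Hg) as [kap [K [Hk HK]]].
  destruct (exists_nat_mul_gt (M + K) kap Hk) as [N [_ HN]]. exists N. intros n m Hn Hm.
  assert (Hlin : forall t, (N <= t)%nat -> M <= kap * INR t - K).
  { intros t Ht. apply le_INR in Ht. nra. }
  destruct (Nat.le_ge_cases n m) as [Hle|Hle].
  - specialize (HK n m Hle). specialize (Hlin n Hn). lra.
  - specialize (HK m n Hle). specialize (Hlin m Hm). rewrite gprod_sym. lra.
Qed.

Lemma orbit_seq_equiv_shift g : loxodromic d mul one act o g ->
  seq_equiv d o (fun n => iter_act g n o) (fun n => act g (iter_act g n o)).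
Proof.
  intros Hg M. destruct (orbit_conv_inf g Hg M) as [N HN]. exists N. intros n m Hn Hm.
  apply (HN n (S m)); lia.
Qed.

Lemma gprod_act_ge k x y : gp x y o - d o (act (inv k) o) <= gp (act k x) (act k y) o.
Proof.
  rewrite <- (gprod_act (inv k) (act k x)), !act_inv_l.
  pose proof (gprod_basepoint_le d d_metric x y o (act (inv k) o)). lra.
Qed.

Lemma conv_inf_act k u : conv_inf d o u -> conv_inf d o (fun n => act k (u n)).
Proof.
  intros Hu M. destruct (Hu (M + d o (act (inv k) o))) as [N HN]. exists N.
  intros n m Hn Hm. pose proof (gprod_act_ge k (u n) (u m)). specialize (HN n m Hn Hm). lra.
Qed.

Lemma seq_equiv_act k u v : seq_equiv d o u v ->
  seq_equiv d o (fun n => act k (u n)) (fun n => act k (v n)).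
Proof.
  intros Huv M. destruct (Huv (M + d o (act (inv k) o))) as [N HN]. exists N.
  intros n m Hn Hm. pose proof (gprod_act_ge k (u n) (v m)). specialize (HN n m Hn Hm). lra.
Qed.

Lemma act_inv_r_fun k (v : nat -> X) : (fun n => act k (act (inv k) (v n))) = v.
Proof. apply functional_extensionality. intros n. apply act_inv_r. Qed.

Lemma act_inv_l_fun k (v : nat -> X) : (fun n => act (inv k) (act k (v n))) = v.
Proof. apply functional_extensionality. intros n. apply act_inv_l. Qed.

Lemma fixes_bd_class k w : conv_inf d o w -> seq_equiv d o w (fun n => act k (w n)) ->
  fixes_bd inv act k (bd_class d o w).
Proof.
  intros Hw Hshift v. unfold act_bd, bd_class. split.
  - intros [Hconv Hequiv]. rewrite <- (act_inv_r_fun k v). split.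
    + apply conv_inf_act; auto.
    + exact (seq_equiv_trans d delta o d_hyp _ _ _ Hshift (seq_equiv_act k _ _ Hequiv)).
  - intros [Hconv Hequiv]. split.
    + apply conv_inf_act; auto.
    + rewrite <- (act_inv_l_fun k w). apply seq_equiv_act.
      exact (seq_equiv_trans d delta o d_hyp _ _ _
               (seq_equiv_sym d o d_metric _ _ Hshift) Hequiv).
Qed.

Lemma fixes_bd_ext k (xi xi' : (nat -> X) -> Prop) : (forall v, xi v <-> xi' v) ->
  fixes_bd inv act k xi -> fixes_bd inv act k xi'.
Proof. intros E H v. unfold act_bd in *. rewrite <- !E. apply H. Qed.

Lemma fixes_bd_of_inv k xi : fixes_bd inv act (inv k) xi -> fixes_bd inv act k xi.
Proof.
  intros H v. specialize (H (fun n => act (inv k) (v n))). unfold act_bd in *.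
  assert (E : (fun n => act (inv (inv k)) (act (inv k) (v n))) = v).
  { apply functional_extensionality. intros n. rewrite act_invK. apply act_inv_r. }
  rewrite E in H. tauto.
Qed.

Lemma iter_index_ge u k N : INR N * d (act u o) o < d (iter_act u k o) o -> (N <= k)%nat.
Proof.
  intros Hfar. destruct (Nat.le_gt_cases N k) as [|Hlt]; auto. exfalso.
  pose proof (dist_iter_act_le u k).
  assert (INR k * d (act u o) o <= INR N * d (act u o) o)
    by (apply Rmult_le_compat_r; [apply dist_ge0 | apply le_INR; lia]).
  lra.
Qed.

Lemma orbits_seq_equiv u v : loxodromic d mul one act o u -> loxodromic d mul one act o v ->
  (forall c, exists k k', c < gp (iter_act u k o) (iter_act v k' o) o) ->
  seq_equiv d o (fun n => iter_act u n o) (fun n => iter_act v n o).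
Proof.
  intros Hu Hv Hunb M. pose proof delta_ge0.
  destruct (orbit_conv_inf u Hu (M + 2 * delta)) as [N1 HN1].
  destruct (orbit_conv_inf v Hv (M + 2 * delta)) as [N2 HN2].
  pose proof (Rmult_le_pos _ _ (pos_INR N1) (dist_ge0 (act u o) o)).
  pose proof (Rmult_le_pos _ _ (pos_INR N2) (dist_ge0 (act v o) o)).
  pose proof (Rle_abs (M + 2 * delta)). pose proof (Rabs_pos (M + 2 * delta)).
  destruct (Hunb (INR N1 * d (act u o) o + INR N2 * d (act v o) o + Rabs (M + 2 * delta)))
    as [k [k' Hk]].
  pose proof (gprod_le_dist_l d d_metric (iter_act u k o) (iter_act v k' o) o).
  pose proof (gprod_le_dist_r d d_metric (iter_act u k o) (iter_act v k' o) o).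
  assert (Hk1 : (N1 <= k)%nat) by (apply (iter_index_ge u); lra).
  assert (Hk2 : (N2 <= k')%nat) by (apply (iter_index_ge v); lra).
  exists (Nat.max N1 N2). intros n m Hn Hm.
  pose proof (gprod_four_point (iter_act u n o) (iter_act u k o) (iter_act v k' o) o
    (M + 2 * delta) (HN1 n k ltac:(lia) Hk1) ltac:(lra)).
  pose proof (HN2 k' m Hk2 ltac:(lia)).
  pose proof (gprod_four_point (iter_act u n o) (iter_act v k' o) (iter_act v m o) o
    (M + delta) ltac:(lra) ltac:(lra)). lra.
Qed.

Definition no_common_fixed_point (g h : G) : Prop :=
  ~ (exists xi, is_bd_point d o xi /\ fixes_bd inv act g xi /\ fixes_bd inv act h xi).

Lemma orbit_gprod_bounded u v : loxodromic d mul one act o u -> loxodromic d mul one act o v ->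
  no_common_fixed_point u v -> exists c, forall k k', gp (iter_act u k o) (iter_act v k' o) o <= c.
Proof.
  intros Hu Hv Hnofix. apply NNPP. intros Hunb. apply Hnofix.
  assert (Hequiv : seq_equiv d o (fun n => iter_act u n o) (fun n => iter_act v n o)).
  { apply orbits_seq_equiv; auto. intros c. apply NNPP. intros H. apply Hunb.
    exists c. intros k k'. apply Rnot_lt_le. intros Hlt. apply H. eauto. }
  exists (bd_class d o (fun n => iter_act u n o)). split; [|split].
  - exists (fun n => iter_act u n o). split; [apply orbit_conv_inf; auto | tauto].
  - apply fixes_bd_class; [apply orbit_conv_inf | apply orbit_seq_equiv_shift]; auto.
  - apply (fixes_bd_ext v (bd_class d o (fun n => iter_act v n o))).
    + intros w. symmetry. apply (bd_class_ext d delta o d_metric d_hyp); auto.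
    + apply fixes_bd_class; [apply orbit_conv_inf | apply orbit_seq_equiv_shift]; auto.
Qed.

Lemma loxodromic_gpow g p : (1 <= p)%nat ->
  loxodromic d mul one act o g -> loxodromic d mul one act o (gpow mul one g p).
Proof.
  intros Hp. rewrite !loxodromicP. intros [l [Hl Hlim]].
  assert (Hp0 : 0 < INR p) by (apply lt_0_INR; lia).
  exists (INR p * l). split; [nra|].
  pose proof (is_lim_seq_scal_l _ (INR p) l
    (is_lim_seq_subseq _ _ _ (filterlim_mul_const p Hp) Hlim)) as Hs.
  apply is_lim_seq_ext_loc with (2 := Hs). exists 1%nat. intros k Hk.
  assert (0 < INR k) by (apply lt_0_INR; lia).
  simpl. rewrite iter_act_gpow, mult_INR. field. lra.
Qed.

Lemma iter_act_conj t g k y :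
  iter_act (mul t (mul g (inv t))) k y = act t (iter_act g k (act (inv t) y)).
Proof.
  induction k as [|k IH]; simpl; [symmetry; apply act_inv_r|].
  fold (iter_act (mul t (mul g (inv t))) k y) (iter_act g k (act (inv t) y)).
  rewrite IH, !act_mul, act_inv_l. reflexivity.
Qed.

Lemma loxodromic_conj t g :
  loxodromic d mul one act o g -> loxodromic d mul one act o (mul t (mul g (inv t))).
Proof.
  rewrite !loxodromicP. intros [l [Hl Hlim]]. exists l. split; auto.
  set (z := act (inv t) o).
  assert (Hz : is_lim_seq (fun k => 2 * d z o / INR k) 0).
  { pose proof (is_lim_seq_scal_l _ (2 * d z o) _
      (is_lim_seq_inv _ _ is_lim_seq_INR ltac:(discriminate))) as Hi.
    simpl in Hi. rewrite Rmult_0_r in Hi. exact Hi. }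
  (* d(t g^k t^-1 o, o) = d(g^k z, z) is within 2 d(z, o) of d(g^k o, o) *)
  apply is_lim_seq_le_le_loc
    with (u := fun k => d (iter_act g k o) o / INR k - 2 * d z o / INR k)
         (w := fun k => d (iter_act g k o) o / INR k + 2 * d z o / INR k).
  - exists 1%nat. intros k Hk. assert (Hk0 : 0 < INR k) by (apply lt_0_INR; lia).
    rewrite iter_act_conj. fold z.
    assert (E : d (act t (iter_act g k z)) o = d (iter_act g k z) z).
    { rewrite <- (act_dist t (iter_act g k z) z). unfold z. rewrite act_inv_r. reflexivity. }
    rewrite E.
    pose proof (dist_iter_act_basepoint g k z) as Hb. apply Rabs_le_between' in Hb.
    unfold Rdiv. rewrite <- Rmult_minus_distr_r, <- Rmult_plus_distr_r.
    assert (0 < / INR k) by (apply Rinv_0_lt_compat; lra). split; nra.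
  - replace l with (l - 0) by ring. apply is_lim_seq_minus'; auto.
  - replace l with (l + 0) by ring. apply is_lim_seq_plus'; auto.
Qed.

Definition letter_act (a b : G) (l : letter) : G :=
  match l with La => a | LA => inv a | Lb => b | LB => inv b end.

Lemma letter_act_linv a b l y : act (letter_act a b l) (act (letter_act a b (linv l)) y) = y.
Proof. destruct l; simpl; try apply act_inv_r; apply act_inv_l. Qed.

Lemma iter_letter_act_linv a b l M y :
  iter_act (letter_act a b l) M (iter_act (letter_act a b (linv l)) M y) = y.
Proof.
  induction M as [|M IH]; auto.
  rewrite (iter_act_Sr (letter_act a b l)), iter_act_S, letter_act_linv. auto.
Qed.

Definition walk (a b : G) (w : list letter) (y : X) : X :=
  fold_right (fun l z => act (letter_act a b l) z) y w.

Lemma walk_app a b w1 w2 y : walk a b (w1 ++ w2) y = walk a b w1 (walk a b w2 y).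
Proof. apply fold_right_app. Qed.

Lemma walk_dist a b w x y : d (walk a b w x) (walk a b w y) = d x y.
Proof. induction w as [|l w IH]; simpl; auto. rewrite act_dist. auto. Qed.

Lemma walk_repeat a b l m y : walk a b (repeat l m) y = iter_act (letter_act a b l) m y.
Proof. induction m as [|m IH]; simpl; auto. rewrite IH. reflexivity. Qed.

Definition ping_pong (a b : G) (L c : R) : Prop :=
  0 <= c /\ 2 * c + 3 * delta < L /\
  (forall l l', l <> l' -> gp (act (letter_act a b l) o) (act (letter_act a b l') o) o <= c) /\
  (forall l, L <= d o (act (letter_act a b l) o)).

Section PingPong.
Variables (a b : G) (L c : R).
Hypothesis ab_ping_pong : ping_pong a b L c.

Local Notation beta := (L - 2 * c - 2 * delta).

Definition word_point (w : list letter) (k : nat) : X := walk a b (firstn k w) o.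

Lemma word_chain F w : (forall x y, d (F x) (F y) = d x y) -> reduced w ->
  chain d (fun k => F (word_point w k)) (length w) L c.
Proof.
  intros HF Hw. destruct ab_ping_pong as (_ & _ & Hturn & Hstep). split.
  - intros k Hk. unfold word_point.
    rewrite (firstn_S_nth w k La Hk), HF, walk_app, walk_dist. apply Hstep.
  - intros k H1 H2. destruct k as [|k]; [lia|]. replace (S k - 1)%nat with k by lia.
    set (W := fun z => F (walk a b (firstn (S k) w) z)).
    assert (HW : forall x y, d (W x) (W y) = d x y).
    { intros. unfold W. rewrite HF. apply walk_dist. }
    assert (E0 : F (word_point w k) = W (act (letter_act a b (linv (nth k w La))) o)).
    { unfold W, word_point. rewrite (firstn_S_nth w k La), walk_app by lia. simpl.
      rewrite letter_act_linv. reflexivity. }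
    assert (E2 : F (word_point w (S (S k))) = W (act (letter_act a b (nth (S k) w La)) o)).
    { unfold W, word_point. rewrite (firstn_S_nth w (S k) La), walk_app by lia. reflexivity. }
    change (F (word_point w (S k))) with (W o).
    rewrite E0, E2, (gprod_isometry d W HW). apply Hturn.
    intros E. apply (reduced_nth w Hw k H2). rewrite <- E. destruct (nth k w La); reflexivity.
Qed.

Definition conj_point (al : letter) (i M : nat) : X :=
  iter_act b i (iter_act (letter_act a b al) M (iter_act (inv b) i o)).

Definition conj_word (al : letter) (i M : nat) : list letter :=
  repeat Lb i ++ repeat al M ++ repeat LB i.

Section PowerOfA.
Variable al : letter.
Hypothesis al_a : al = La \/ al = LA.

Lemma conj_word_reduced i M : (1 <= i)%nat -> (1 <= M)%nat -> reduced (conj_word al i M).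
Proof.
  intros Hi HM. destruct i as [|i]; [lia|]. destruct M as [|M]; [lia|].
  unfold conj_word. rewrite <- (app_nil_r (repeat LB (S i))).
  assert (Hal : al <> linv Lb /\ LB <> linv al)
    by (destruct al_a; subst; simpl; split; discriminate).
  apply reduced_repeat_app; [apply reduced_repeat_app|]; try apply Hal.
  rewrite app_nil_r. apply reduced_repeat.
Qed.

Lemma conj_word_chain i M : (1 <= i)%nat -> (1 <= M)%nat ->
  chain d (word_point (conj_word al i M)) (i + M + i) L c.
Proof.
  intros Hi HM. replace (i + M + i)%nat with (length (conj_word al i M))
    by (unfold conj_word; rewrite !length_app, !repeat_length; lia).
  exact (word_chain (fun z => z) _ (fun _ _ => eq_refl) (conj_word_reduced i M Hi HM)).
Qed.

Lemma conj_word_end i M : word_point (conj_word al i M) (i + M + i) = conj_point al i M.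
Proof.
  unfold word_point, conj_word. rewrite firstn_all2
    by (rewrite !length_app, !repeat_length; lia).
  rewrite !walk_app, !walk_repeat. reflexivity.
Qed.

Lemma conj_word_prefix i M t : (t <= M)%nat ->
  word_point (conj_word al i M) (i + t) = iter_act b i (iter_act (letter_act a b al) t o).
Proof.
  intros Ht. unfold word_point, conj_word.
  replace (i + t)%nat with (length (repeat Lb i) + t)%nat by (rewrite repeat_length; lia).
  rewrite firstn_app_2, firstn_repeat_app, walk_app, !walk_repeat by lia. reflexivity.
Qed.

Lemma dist_conj_point_ge i M : (1 <= i)%nat -> (1 <= M)%nat ->
  INR (i + M + i) * beta <= d o (conj_point al i M).
Proof.
  intros Hi HM. destruct ab_ping_pong as (Hc & HL & _). pose proof delta_ge0.
  rewrite <- conj_word_end.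
  apply (chain_dist_ge d delta d_metric d_hyp _ _ L c Hc (conj_word_chain i M Hi HM)); [lra | lia].
Qed.

Lemma gprod_conj_point_ge i M M' : (1 <= i)%nat -> (1 <= M <= M')%nat ->
  INR (i + M) * beta - c - 3 * delta <= gp (conj_point al i M) (conj_point al i M') o.
Proof.
  intros Hi HM. destruct ab_ping_pong as (Hc & HL & _).
  set (u := iter_act b i (iter_act (letter_act a b al) M o)).
  (* both endpoints are beyond the common point u of the two words *)
  assert (Hu : forall M'', (M <= M'')%nat ->
    INR (i + M) * beta - c - 2 * delta <= gp u (conj_point al i M'') o).
  { intros M'' HM''. unfold u. rewrite <- (conj_word_prefix i M'' M HM''), <- conj_word_end.
    exact (chain_gprod_ge d delta d_metric d_hyp _ _ L c Hc HL
             (conj_word_chain i M'' Hi ltac:(lia)) (i + M) ltac:(lia)). }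
  pose proof (Hu M ltac:(lia)) as HuM. rewrite gprod_sym in HuM.
  pose proof (gprod_four_point _ u _ o _ HuM (Hu M' ltac:(lia))). lra.
Qed.

Definition pair_word (i j M M' : nat) : list letter :=
  repeat Lb i ++ repeat (linv al) M ++ repeat Lb (j - i) ++ repeat al M' ++ repeat LB j.

Lemma pair_word_reduced i j M M' : (1 <= i)%nat -> (i < j)%nat -> (1 <= M)%nat -> (1 <= M')%nat ->
  reduced (pair_word i j M M').
Proof.
  intros Hi Hij HM HM'. unfold pair_word.
  destruct i as [|i]; [lia|]. destruct M as [|M]; [lia|]. destruct M' as [|M']; [lia|].
  destruct (j - S i)%nat as [|k] eqn:Ek; [lia|]. destruct j as [|j]; [lia|].
  rewrite <- (app_nil_r (repeat LB (S j))).
  assert (Hal : linv al <> linv Lb /\ Lb <> linv (linv al) /\ al <> linv Lb /\ LB <> linv al)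
    by (destruct al_a; subst; simpl; repeat split; discriminate).
  repeat (apply reduced_repeat_app; [|apply Hal]).
  rewrite app_nil_r. apply reduced_repeat.
Qed.

(* Both points end a chain read along one reduced word through b^i o, and
   d(b^i o, o) <= i d(b o, o). *)
Lemma gprod_conj_point_le i j M M' : (1 <= i)%nat -> (i < j)%nat -> (1 <= M)%nat -> (1 <= M')%nat ->
  gp (conj_point al i M) (conj_point al j M') o <= INR i * d (act b o) o + c + 2 * delta.
Proof.
  intros Hi Hij HM HM'. destruct ab_ping_pong as (Hc & HL & _).
  set (F := fun z => iter_act (letter_act a b al) M (iter_act (inv b) i z)).
  assert (HF : forall x y, d (F x) (F y) = d x y)
    by (intros; unfold F; rewrite !iter_act_dist; auto).
  set (w := pair_word i j M M').
  pose proof (pair_word_reduced i j M M' Hi Hij HM HM') as Hw.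
  assert (Hlen : length w = (i + M + (j - i + M' + j))%nat)
    by (unfold w, pair_word; rewrite !length_app, !repeat_length; lia).
  pose proof (chain_gprod_interior d delta d_metric d_hyp _ _ L c Hc HL (word_chain F w HF Hw)
    (i + M) ltac:(lia)) as Hint. cbv beta in Hint.
  assert (E0 : F (word_point w 0) = iter_act (letter_act a b al) M (iter_act (inv b) i o))
    by reflexivity.
  assert (En : F (word_point w (length w)) =
               iter_act b (j - i) (iter_act (letter_act a b al) M' (iter_act (inv b) j o))).
  { unfold word_point. rewrite firstn_all. unfold w, pair_word, F.
    rewrite !walk_app, !walk_repeat, iter_act_inv_l, iter_letter_act_linv. reflexivity. }
  assert (Ek : F (word_point w (i + M)) = o).
  { unfold word_point, w, pair_word.
    replace (i + M)%nat with (length (repeat Lb i) + M)%nat by (rewrite repeat_length; lia).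
    rewrite firstn_app_2, firstn_repeat_app, walk_app, !walk_repeat by lia.
    unfold F. rewrite iter_act_inv_l, iter_letter_act_linv. reflexivity. }
  rewrite E0, En, Ek, <- (gprod_isometry d (iter_act b i) (iter_act_dist b i)),
    <- iter_act_add in Hint.
  replace (i + (j - i))%nat with j in Hint by lia.
  pose proof (gprod_basepoint_le d d_metric (conj_point al i M) (conj_point al j M') o
    (iter_act b i o)).
  pose proof (dist_iter_act_le b i). rewrite (dist_sym o) in *. unfold conj_point in *. lra.
Qed.

End PowerOfA.

Definition schottky_elt (n i : nat) : G :=
  mul (gpow mul one b i) (mul (gpow mul one a n) (inv (gpow mul one b i))).

Lemma act_gpow_schottky_elt n i k :
  act (gpow mul one (schottky_elt n i) k) o = conj_point La i (k * n).
Proof.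
  rewrite act_gpow. unfold schottky_elt. rewrite iter_act_conj, act_gpow, act_inv_gpow.
  unfold conj_point. simpl letter_act. rewrite iter_act_gpow. reflexivity.
Qed.

Lemma act_schottky_elt n i : act (schottky_elt n i) o = conj_point La i n.
Proof.
  rewrite <- (Nat.mul_1_l n) at 2. rewrite <- act_gpow_schottky_elt. simpl.
  rewrite act_mul, act_one. reflexivity.
Qed.

Lemma act_inv_schottky_elt n i : act (inv (schottky_elt n i)) o = conj_point LA i n.
Proof.
  rewrite <- (act_inv_l (schottky_elt n i) (conj_point LA i n)). f_equal.
  unfold schottky_elt, conj_point. rewrite !act_mul, !act_gpow, act_inv_gpow.
  simpl letter_act. rewrite iter_act_inv_l, iter_act_inv_r, iter_act_inv_r. reflexivity.
Qed.

Section Schottky.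
Variables (N n : nat).
Hypothesis n_pos : (1 <= n)%nat.

Local Notation K := (INR N * d (act b o) o + c + 2 * delta).

Hypothesis n_large : 2 * K + c + 6 * delta + 2 <= INR n * beta.

Definition schottky_set : list G := map (schottky_elt n) (seq 1 N).

Lemma in_schottky_set s : In s schottky_set -> exists i, s = schottky_elt n i /\ (1 <= i <= N)%nat.
Proof.
  unfold schottky_set. rewrite in_map_iff. intros [i [<- Hi]]. apply in_seq in Hi.
  exists i. split; auto. lia.
Qed.

Lemma conj_point_separated al M : al = La \/ al = LA -> (1 <= M)%nat ->
  gprod_separated d o (fun i => conj_point al i M) N K.
Proof.
  intros Hal HM i j Hi Hj Hij.
  assert (Hb : forall i', (i' <= N)%nat -> INR i' * d (act b o) o <= INR N * d (act b o) o)
    by (intros; apply Rmult_le_compat_r; [apply dist_ge0 | apply le_INR; auto]).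
  destruct (Nat.lt_gt_cases i j) as [[Hlt|Hlt] _]; [lia| |].
  - pose proof (gprod_conj_point_le al Hal i j M M ltac:(lia) Hlt HM HM).
    pose proof (Hb i ltac:(lia)). lra.
  - pose proof (gprod_conj_point_le al Hal j i M M ltac:(lia) Hlt HM HM).
    pose proof (Hb j ltac:(lia)). rewrite gprod_sym. lra.
Qed.

Lemma dist_conj_point_large al i : al = La \/ al = LA -> (1 <= i)%nat ->
  INR n * beta <= d (conj_point al i n) o.
Proof.
  intros Hal Hi. destruct ab_ping_pong as (Hc & HL & _). pose proof delta_ge0.
  pose proof (dist_conj_point_ge al Hal i n Hi n_pos).
  assert (INR n <= INR (i + n + i)) by (apply le_INR; lia).
  rewrite dist_sym. nra.
Qed.

Lemma schottky_count_ge (phi : G -> X -> X) (T' : nat -> X -> X) x y :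
  (forall i z w, d (phi (schottky_elt n i) z) (phi (schottky_elt n i) w) = d z w) ->
  (forall i z, phi (schottky_elt n i) (T' i z) = z) ->
  (forall i, (1 <= i <= N)%nat -> INR n * beta <= d (phi (schottky_elt n i) o) o) ->
  gprod_separated d o (fun i => phi (schottky_elt n i) o) N K ->
  gprod_separated d o (fun i => T' i o) N K ->
  INR N - 2 <= INR (count_le d o (K + 2 * delta + 1) x (fun s => phi s y) schottky_set).
Proof.
  intros Hiso Hinv Hfar HsepT HsepT'. destruct ab_ping_pong as (Hc & _). pose proof delta_ge0.
  destruct (gprod_translates_few_large d delta o d_metric d_hyp
    (fun i => phi (schottky_elt n i)) T' N K x y Hiso Hinv
    ltac:(intros i Hi; specialize (Hfar i Hi); lra) HsepT HsepT') as [i1 [i2 Hbad]].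
  unfold count_le, schottky_set. rewrite filter_map_swap, length_map.
  apply (length_filter_ge_excl _ N i1 i2). intros i Hi Hfalse.
  destruct (Rle_dec _ _) as [|Hgt]; [discriminate|]. apply Hbad; auto. lra.
Qed.

Lemma schottky_set_schottky (eps : R) : 2 <= eps * INR N ->
  schottky d inv act o eps (K + 2 * delta + 1) (INR n * beta) schottky_set.
Proof.
  intros HN.
  assert (Hlen : INR (length schottky_set) = INR N)
    by (unfold schottky_set; rewrite length_map, length_seq; reflexivity).
  unfold schottky. rewrite Hlen.
  assert (Hcount : forall r, INR N - 2 <= r -> (1 - eps) * INR N <= r) by (intros; nra).
  split.
  - intros x y. split; apply Hcount.
    + apply (schottky_count_ge act (fun i => act (inv (schottky_elt n i)))); intros.
      * apply act_dist.
      * apply act_inv_r.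
      * rewrite act_schottky_elt. apply dist_conj_point_large; auto; lia.
      * intros i j Hi Hj Hij. rewrite !act_schottky_elt.
        apply conj_point_separated; auto.
      * intros i j Hi Hj Hij. rewrite !act_inv_schottky_elt.
        apply conj_point_separated; auto.
    + apply (schottky_count_ge (fun s => act (inv s)) (fun i => act (schottky_elt n i))); intros.
      * apply act_dist.
      * apply act_inv_l.
      * rewrite act_inv_schottky_elt. apply dist_conj_point_large; auto; lia.
      * intros i j Hi Hj Hij. rewrite !act_inv_schottky_elt.
        apply conj_point_separated; auto.
      * intros i j Hi Hj Hij. rewrite !act_schottky_elt.
        apply conj_point_separated; auto.
  - intros s Hs. destruct (in_schottky_set s Hs) as [i [-> Hi]].
    rewrite act_schottky_elt, dist_sym. apply dist_conj_point_large; auto; lia.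
Qed.

Lemma K_ge0 : 0 <= K.
Proof.
  destruct ab_ping_pong as (Hc & _). pose proof delta_ge0.
  pose proof (Rmult_le_pos _ _ (pos_INR N) (dist_ge0 (act b o) o)). lra.
Qed.

Lemma schottky_set_NoDup : NoDup schottky_set.
Proof.
  apply NoDup_map_NoDup_ForallPairs; [|apply seq_NoDup].
  intros i j Hi Hj E. apply in_seq in Hi, Hj.
  destruct (Nat.eq_dec i j) as [|Hij]; auto. exfalso.
  pose proof (conj_point_separated La n ltac:(auto) n_pos i j ltac:(lia) ltac:(lia) Hij) as Hsep.
  cbv beta in Hsep. rewrite <- !act_schottky_elt, <- E, act_schottky_elt, gprod_diag in Hsep.
  pose proof (dist_conj_point_large La i ltac:(auto) ltac:(lia)). pose proof K_ge0.
  pose proof delta_ge0. destruct ab_ping_pong as (Hc & _). lra.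
Qed.

Lemma schottky_set_loxodromic s : loxodromic d mul one act o a ->
  In s schottky_set -> loxodromic d mul one act o s.
Proof.
  intros Ha Hs. destruct (in_schottky_set s Hs) as [i [-> _]].
  apply loxodromic_conj, loxodromic_gpow; auto.
Qed.

Lemma schottky_VC_disjoint s t x : In s schottky_set -> In t schottky_set -> s <> t ->
  ~ (VC d o (K + 2 * delta + 1) (gplus d mul one act o s) x /\
     VC d o (K + 2 * delta + 1) (gplus d mul one act o t) x).
Proof.
  intros Hs Ht Hst [Vs Vt].
  destruct (in_schottky_set s Hs) as [i [-> Hi]]. destruct (in_schottky_set t Ht) as [j [-> Hj]].
  assert (Hij : i <> j) by (intros ->; auto).
  destruct (VC_gprod_ge_eventually d delta o d_metric d_hyp _ _ x Vs) as [N1 HN1].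
  destruct (VC_gprod_ge_eventually d delta o d_metric d_hyp _ _ x Vt) as [N2 HN2].
  set (k := Nat.max 1 (Nat.max N1 N2)).
  specialize (HN1 k ltac:(lia)). specialize (HN2 k ltac:(lia)).
  rewrite act_gpow_schottky_elt, gprod_sym in HN1. rewrite act_gpow_schottky_elt in HN2.
  pose proof (gprod_four_point _ x _ o _ HN1 HN2).
  pose proof (conj_point_separated La (k * n) ltac:(auto) ltac:(nia) i j Hi Hj Hij). lra.
Qed.

Lemma schottky_orbit_conv_inf i : (1 <= i)%nat ->
  conv_inf d o (fun k => conj_point La i (k * n)).
Proof.
  intros Hi M. destruct ab_ping_pong as (Hc & HL & _). pose proof delta_ge0.
  destruct (exists_nat_mul_gt (M + c + 3 * delta) beta ltac:(lra)) as [N0 [HN0 HM]].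
  assert (Hgrow : forall k1 k2, (N0 <= k1 <= k2)%nat ->
    M <= gp (conj_point La i (k1 * n)) (conj_point La i (k2 * n)) o).
  { intros k1 k2 Hk. pose proof (gprod_conj_point_ge La ltac:(auto) i (k1 * n) (k2 * n) Hi
      ltac:(nia)).
    assert (INR N0 <= INR (i + k1 * n)) by (apply le_INR; nia). nra. }
  exists N0. intros k1 k2 Hk1 Hk2. destruct (Nat.le_ge_cases k1 k2).
  - apply Hgrow. lia.
  - rewrite gprod_sym. apply Hgrow. lia.
Qed.

Lemma schottky_VC_self s : In s schottky_set ->
  VC d o (K + 2 * delta + 1 + delta) (gplus d mul one act o s) (act s o).
Proof.
  intros Hs. destruct (in_schottky_set s Hs) as [i [-> Hi]].
  destruct ab_ping_pong as (Hc & HL & _). pose proof delta_ge0. pose proof K_ge0.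
  unfold gplus. apply gprod_ge_VC; auto.
  - pose proof (schottky_orbit_conv_inf i ltac:(lia)) as Hconv.
    split; intros M; destruct (Hconv M) as [N0 HN0]; exists N0; intros k1 k2 Hk1 Hk2;
      rewrite !act_gpow_schottky_elt; auto.
  - intros k Hk. rewrite act_gpow_schottky_elt, act_schottky_elt.
    pose proof (gprod_conj_point_ge La ltac:(auto) i n (k * n) ltac:(lia) ltac:(nia)).
    assert (INR n <= INR (i + n)) by (apply le_INR; lia). nra.
Qed.

End Schottky.

Lemma ping_pong_schottky : loxodromic d mul one act o a ->
  forall eps : R, 0 < eps < 1 ->
  exists C : R, forall D : R,
    exists S : list G,
      S <> nil /\ NoDup S /\
      (forall s, In s S -> loxodromic d mul one act o s) /\
      schottky d inv act o eps C D S /\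
      (forall s t, In s S -> In t S -> s <> t ->
         forall x, ~ (VC d o C (gplus d mul one act o s) x /\
                      VC d o C (gplus d mul one act o t) x)) /\
      (forall s, In s S -> VC d o (C + delta) (gplus d mul one act o s) (act s o)).
Proof.
  intros Ha eps Heps. destruct ab_ping_pong as (Hc & HL & _). pose proof delta_ge0.
  destruct (exists_nat_mul_gt 2 eps ltac:(lra)) as [N [HN1 HN]].
  set (K := INR N * d (act b o) o + c + 2 * delta).
  exists (K + 2 * delta + 1). intros D.
  destruct (exists_nat_mul_gt (Rabs D + 2 * K + c + 6 * delta + 2) beta ltac:(lra))
    as [n [Hn1 Hn]].
  assert (HK : 0 <= K) by apply K_ge0. rewrite Rmult_comm in Hn.
  pose proof (Rabs_pos D). pose proof (Rle_abs D).
  assert (Hlarge : 2 * K + c + 6 * delta + 2 <= INR n * beta) by lra.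
  destruct (schottky_set_schottky N n Hn1 Hlarge eps ltac:(lra)) as [Hcount Hfar].
  exists (schottky_set N n). split; [|split; [|split; [|split; [|split]]]].
  - unfold schottky_set. destruct N; [lia|]. discriminate.
  - apply schottky_set_NoDup; auto.
  - intros s. apply schottky_set_loxodromic; auto.
  - split; [exact Hcount|]. intros s Hs. specialize (Hfar s Hs). lra.
  - intros s t Hs Ht Hst x. exact (schottky_VC_disjoint N n Hn1 s t x Hs Ht Hst).
  - intros s Hs. exact (schottky_VC_self N n Hn1 Hlarge s Hs).
Qed.

End PingPong.

Lemma act_letter_act_gpow g h m l y :
  act (letter_act (gpow mul one g m) (gpow mul one h m) l) y = iter_act (letter_act g h l) m y.
Proof. destruct l; simpl; rewrite ?act_inv_gpow, ?act_gpow; reflexivity. Qed.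

Lemma ping_pong_gpow g h m L c : 0 <= c -> 2 * c + 3 * delta < L ->
  (forall l, L <= d (iter_act (letter_act g h l) m o) o) ->
  (forall l,
     gp (iter_act (letter_act g h (linv l)) m o) (iter_act (letter_act g h l) m o) o <= c) ->
  (forall l l', l = La \/ l = LA -> l' = Lb \/ l' = LB ->
     gp (iter_act (letter_act g h l) m o) (iter_act (letter_act g h l') m o) o <= c) ->
  ping_pong (gpow mul one g m) (gpow mul one h m) L c.
Proof.
  intros Hc HL Hdisp Hturn Hcross. split; [|split; [|split]]; auto.
  - intros l l' Hll'. rewrite !act_letter_act_gpow.
    destruct l, l'; try congruence;
      first [ apply (Hturn La) | apply (Hturn LA) | apply (Hturn Lb) | apply (Hturn LB)
            | solve [apply Hcross; auto] | rewrite gprod_sym; solve [apply Hcross; auto] ].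
  - intros l. rewrite act_letter_act_gpow, dist_sym. apply Hdisp.
Qed.

Lemma letter_orbits_gprod_bounded g h :
  loxodromic d mul one act o g -> loxodromic d mul one act o h -> no_common_fixed_point g h ->
  exists c0, forall l l' k, l = La \/ l = LA -> l' = Lb \/ l' = LB ->
    gp (iter_act (letter_act g h l) k o) (iter_act (letter_act g h l') k o) o <= c0.
Proof.
  intros Hg Hh Hgh.
  assert (Hbound : forall u v, u = g \/ u = inv g -> v = h \/ v = inv h ->
    exists c0, forall k k', gp (iter_act u k o) (iter_act v k' o) o <= c0).
  { intros u v Hu Hv. apply orbit_gprod_bounded.
    - destruct Hu; subst; auto using loxodromic_inv.
    - destruct Hv; subst; auto using loxodromic_inv.
    - intros [xi (Hxi & Hfu & Hfv)]. apply Hgh. exists xi. split; [|split]; auto.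
      + destruct Hu; subst; auto using fixes_bd_of_inv.
      + destruct Hv; subst; auto using fixes_bd_of_inv. }
  destruct (Hbound g h) as [c1 H1]; auto.
  destruct (Hbound (inv g) h) as [c2 H2]; auto.
  destruct (Hbound g (inv h)) as [c3 H3]; auto.
  destruct (Hbound (inv g) (inv h)) as [c4 H4]; auto.
  exists (Rmax (Rmax c1 c2) (Rmax c3 c4)). intros l l' k Hl Hl'.
  pose proof (Rmax_l c1 c2). pose proof (Rmax_r c1 c2).
  pose proof (Rmax_l c3 c4). pose proof (Rmax_r c3 c4).
  pose proof (Rmax_l (Rmax c1 c2) (Rmax c3 c4)). pose proof (Rmax_r (Rmax c1 c2) (Rmax c3 c4)).
  destruct Hl, Hl'; subst; simpl letter_act;
    [specialize (H1 k k) | specialize (H3 k k) | specialize (H2 k k) | specialize (H4 k k)]; lra.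
Qed.

Lemma non_elementary_ping_pong : non_elementary d mul one inv act o ->
  exists a b L c, ping_pong a b L c /\ loxodromic d mul one act o a.
Proof.
  intros [g [h (Hg & Hh & Hgh)]]. pose proof delta_ge0.
  destruct (letter_orbits_gprod_bounded g h Hg Hh Hgh) as [c0 Hc0].
  pose proof Hg as Hg'. pose proof Hh as Hh'.
  rewrite loxodromicP in Hg', Hh'. destruct Hg' as [lg [Hlg Hlimg]], Hh' as [lh [Hlh Hlimh]].
  set (lam := Rmin lg lh).
  assert (Hlam : 0 < lam) by (apply Rmin_glb_lt; auto).
  pose proof (Rmin_l lg lh). pose proof (Rmin_r lg lh).
  destruct (gprod_inv_orbit_small g lg Hlimg (lam / 8) ltac:(lra)) as [Pg HPg].
  destruct (gprod_inv_orbit_small h lh Hlimh (lam / 8) ltac:(lra)) as [Ph HPh].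
  destruct (exists_nat_mul_gt (2 * Rabs c0 + 4 * delta) lam Hlam) as [m0 [Hm0 Hlm0]].
  set (m := Nat.max m0 (Nat.max Pg Ph)).
  assert (Hm : INR m0 <= INR m) by (apply le_INR; lia).
  assert (Hm1 : (1 <= m)%nat) by lia.
  set (L := lam * INR m). set (c := Rmax c0 (L / 8)).
  pose proof (Rmax_l c0 (L / 8)). pose proof (Rmax_r c0 (L / 8)).
  pose proof (Rle_abs c0). pose proof (Rabs_pos c0).
  assert (HL : 2 * Rabs c0 + 4 * delta < L) by (unfold L; nra).
  exists (gpow mul one g m), (gpow mul one h m), L, c.
  split; [|apply loxodromic_gpow; auto].
  apply ping_pong_gpow.
  - unfold c. lra.
  - unfold c, Rmax. destruct (Rle_dec _ _); lra.
  - pose proof (stable_length_le g lg Hlimg m Hm1). pose proof (stable_length_le h lh Hlimh m Hm1).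
    assert (INR m * lam <= INR m * lg /\ INR m * lam <= INR m * lh)
      by (split; apply Rmult_le_compat_l; auto; apply pos_INR).
    intros l. destruct l; simpl letter_act; rewrite ?dist_iter_act_inv; unfold L; lra.
  - specialize (HPg m ltac:(lia)). specialize (HPh m ltac:(lia)).
    assert (lam / 8 * INR m = L / 8) by (unfold L; field).
    unfold c. intros l. destruct l; cbn [letter_act linv];
      first [lra | rewrite gprod_sym; lra].
  - unfold c. intros l l' Hl Hl'. specialize (Hc0 l l' m Hl Hl'). lra.
Qed.

End Action.

Theorem lemma5p4 (X G : Type) (d : X -> X -> R) (delta : R)
  (mul : G -> G -> G) (one : G) (inv : G -> G) (act : G -> X -> X) (o : X) :
  is_metric d -> geodesic d -> hyperbolic d delta ->
  is_group mul one inv -> isometric_action d mul one act ->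
  non_elementary d mul one inv act o ->
  forall eps : R, 0 < eps < 1 ->
  exists C : R, forall D : R,
    exists S : list G,
      S <> nil /\ NoDup S /\
      (forall s, In s S -> loxodromic d mul one act o s) /\
      schottky d inv act o eps C D S /\
      (forall s t, In s S -> In t S -> s <> t ->
         forall x, ~ (VC d o C (gplus d mul one act o s) x /\
                      VC d o C (gplus d mul one act o t) x)) /\
      (forall s, In s S -> VC d o (C + delta) (gplus d mul one act o s) (act s o)).
Proof.
  intros Hd _ Hhyp HG Hact Hne.
  destruct (non_elementary_ping_pong d delta mul one inv act o Hd Hhyp HG Hact Hne)
    as (a & b & L & c & Hab & Ha).
  exact (ping_pong_schottky d delta mul one inv act o Hd Hhyp HG Hact a b L c Hab Ha).
Qed.
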